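(* Let $\mathcal{G}$ be an ultragraph, $R$ a unital commutative ring, and $\{R_e,D_A,f_e\}_{e\in\mathcal{G}^1,A\in\mathcal{G}^0}$ a $\mathcal{G}$-algebraic branching system on a set $X$. Let $M$ be the $R$-module of all maps $X\to R$. Then there exists a unique $R$-algebra homomorphism $\pi:L_R(\mathcal{G})\to \mathrm{Hom}_R(M)$ such that, for each $e\in\mathcal{G}^1$, $A\in\mathcal{G}^0$ and $\phi\in M$: $\pi(s_e)(\phi)=(\phi\circ f_e^{-1})\cdot 1_{R_e}$, $\pi(s_e^* )(\phi)=(\phi\circ f_e)\cdot 1_{D_{r(e)}}$ and $\pi(p_A)(\phi)=1_{D_A}\phi$. Here $(\phi\circ f_e^{-1})\cdot 1_{R_e}$ denotes the map that equals $\phi(f_e^{-1}(x))$ at $x\in R_e$ and $0$ elsewhere, and $(\phi\circ f_e)\cdot 1_{D_{r(e)}}$ the map that equals $\phi(f_e(x))$ at $x\in D_{r(e)}$ and $0$ elsewhere.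
   Context: An ultragraph $\mathcal{G}=(G^0,\mathcal{G}^1,r,s)$ consists of sets $G^0$, $\mathcal{G}^1$, a map $s:\mathcal{G}^1\to G^0$ and a map $r:\mathcal{G}^1\to P(G^0)\setminus\{\emptyset\}$. $\mathcal{G}^0$ is the smallest subset of $P(G^0)$ containing $\{v\}$ ($v\in G^0$) and $r(e)$ ($e\in\mathcal{G}^1$), closed under finite unions and intersections; write $p_v=p_{\{v\}}$, $D_v=D_{\{v\}}$. $L_R(\mathcal{G})$ is the universal $R$-algebra generated by $\{s_e,s_e^*:e\in\mathcal{G}^1\}\cup\{p_A:A\in\mathcal{G}^0\}$ subject to: (1) $p_\emptyset=0$, $p_Ap_B=p_{A\cap B}$, $p_{A\cup B}=p_A+p_B-p_{A\cap B}$; (2) $p_{s(e)}s_e=s_ep_{r(e)}=s_e$, $p_{r(e)}s_e^*=s_e^*p_{s(e)}=s_e^*$; (3) $s_e^*s_f=\delta_{e,f}p_{r(e)}$; (4) $p_v=\sum_{s(e)=v}s_es_e^*$ whenever $0<|s^{-1}(v)|<\infty$. A $\mathcal{G}$-algebraic branching system on $X$ is a family of subsets $R_e,D_A\subseteq X$ and maps $f_e$ with: (i) $R_e\cap R_f=\emptyset$ for $e\neq f$; (ii) $D_\emptyset=\emptyset$, $D_A\cap D_B=D_{A\cap B}$, $D_A\cup D_B=D_{A\cup B}$; (iii) $R_e\subseteq D_{s(e)}$; (iv) $D_v=\bigcup_{e\in s^{-1}(v)}R_e$ whenever $0<|s^{-1}(v)|<\infty$; (v) $f_e:D_{r(e)}\to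 R_e$ is a bijection with inverse $f_e^{-1}$. $1_Y$ denotes the characteristic function of $Y\subseteq X$; $\mathrm{Hom}_R(M)$ is the algebra of $R$-module endomorphisms of $M$. *)

From HB Require Import structures.
From mathcomp Require Import all_boot all_algebra.
From mathcomp Require Import boolp classical_sets.
From Stdlib Require Import List.

Set Implicit Arguments.
Unset Strict Implicit.
Unset Printing Implicit Defensive.

Import GRing.Theory.
Local Open Scope ring_scope.
Local Open Scope classical_set_scope.

Record ultragraph := Ultragraph {
  ug_V : Type;
  ug_E : Type;
  ug_s : ug_E -> ug_V;
  ug_r : ug_E -> set ug_V;
  ug_r_neq0 : forall e, ug_r e !=set0
}.

Inductive ugG0 (G : ultragraph) : set (ug_V G) -> Prop :=
| ugG0_vert v : ugG0 [set v]
| ugG0_range e : ugG0 (ug_r e)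
| ugG0_empty : ugG0 set0
| ugG0_union A B : ugG0 A -> ugG0 B -> ugG0 (A `|` B)
| ugG0_inter A B : ugG0 A -> ugG0 B -> ugG0 (A `&` B).

Definition src_enum (G : ultragraph) (v : ug_V G) (l : list (ug_E G)) : Prop :=
  NoDup l /\ (forall e, In e l <-> ug_s e = v).

Definition fin_nonempty_src (G : ultragraph) (v : ug_V G) : Prop :=
  (exists e, ug_s e = v) /\ (exists l : list (ug_E G), forall e, In e l <-> ug_s e = v).

Record nualg (R : comPzRingType) := NUAlg {
  nua_car :> lmodType R;
  nua_mul : nua_car -> nua_car -> nua_car;
  nua_mulA : associative nua_mul;
  nua_mulDl : left_distributive nua_mul +%R;
  nua_mulDr : right_distributive nua_mul +%R;
  nua_scalerAl : forall (a : R) (x y : nua_car), a *: nua_mul x y = nua_mul (a *: x) y;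
  nua_scalerAr : forall (a : R) (x y : nua_car), a *: nua_mul x y = nua_mul x (a *: y)
}.

Definition nua_hom (R : comPzRingType) (A B : nualg R) (phi : A -> B) : Prop :=
  (forall x y : A, phi (x + y) = phi x + phi y) /\
  (forall (a : R) (x : A), phi (a *: x) = a *: phi x) /\
  (forall x y : A, phi (nua_mul x y) = nua_mul (phi x) (phi y)).

(** A family in B satisfying the defining relations (1)-(4) of L_R(G).
    [p A] is only meaningful for A in \mathcal{G}^0. *)
Definition ug_family (G : ultragraph) (R : comPzRingType) (B : nualg R)
    (s ss : ug_E G -> B) (p : set (ug_V G) -> B) : Prop :=
  p set0 = 0 /\
  (forall A C, ugG0 A -> ugG0 C -> nua_mul (p A) (p C) = p (A `&` C)) /\
  (forall A C, ugG0 A -> ugG0 C -> p (A `|` C) = p A + p C - p (A `&` C)) /\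
  (forall e, nua_mul (p [set ug_s e]) (s e) = s e) /\
  (forall e, nua_mul (s e) (p (ug_r e)) = s e) /\
  (forall e, nua_mul (p (ug_r e)) (ss e) = ss e) /\
  (forall e, nua_mul (ss e) (p [set ug_s e]) = ss e) /\
  (forall e, nua_mul (ss e) (s e) = p (ug_r e)) /\
  (forall e f, e <> f -> nua_mul (ss e) (s f) = 0) /\
  (forall v l, src_enum v l -> l <> nil ->
     p [set v] = \sum_(e <- l) nua_mul (s e) (ss e)).

(** (L, s, s^*, p) is the universal R-algebra generated by a G-family,
    i.e. it is (a copy of) the Leavitt path algebra L_R(G). *)
Definition is_LPA (G : ultragraph) (R : comPzRingType) (L : nualg R)
    (s ss : ug_E G -> L) (p : set (ug_V G) -> L) : Prop :=
  ug_family s ss p /\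
  forall (B : nualg R) (t tt : ug_E G -> B) (q : set (ug_V G) -> B),
    ug_family t tt q ->
    exists phi : L -> B,
      [/\ nua_hom phi,
          (forall e, phi (s e) = t e),
          (forall e, phi (ss e) = tt e),
          (forall A, ugG0 A -> phi (p A) = q A) &
          (forall phi' : L -> B, nua_hom phi' ->
             (forall e, phi' (s e) = t e) ->
             (forall e, phi' (ss e) = tt e) ->
             (forall A, ugG0 A -> phi' (p A) = q A) ->
             forall x, phi' x = phi x)].

(** * G-algebraic branching systems on X.
    [f e] is f_e : D_{r(e)} -> R_e and [finv e] its inverse f_e^{-1}
    (values outside the relevant domains are irrelevant). *)
Definition branching_system (G : ultragraph) (X : Type)
    (Rs : ug_E G -> set X) (D : set (ug_V G) -> set X)
    (f finv : ug_E G -> X -> X) : Prop :=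
  (forall e e', e <> e' -> Rs e `&` Rs e' = set0) /\
  D set0 = set0 /\
  (forall A C, ugG0 A -> ugG0 C -> D A `&` D C = D (A `&` C)) /\
  (forall A C, ugG0 A -> ugG0 C -> D A `|` D C = D (A `|` C)) /\
  (forall e, Rs e `<=` D [set ug_s e]) /\
  (forall v, fin_nonempty_src v ->
     D [set v] = \bigcup_(e in [set e | ug_s e = v]) Rs e) /\
  (forall e x, D (ug_r e) x -> Rs e (f e x)) /\
  (forall e y, Rs e y -> D (ug_r e) (finv e y)) /\
  (forall e x, D (ug_r e) x -> finv e (f e x) = x) /\
  (forall e y, Rs e y -> f e (finv e y) = y).

(** Elements of Hom_R(M), M = X -> R: R-linear maps M -> M.
    [endo_hom pi] says pi : L -> Hom_R(M) is an R-algebra homomorphism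
    (product in Hom_R(M) is composition). *)
Definition endo_hom (R : comPzRingType) (L : nualg R) (X : Type)
    (pi : L -> (X -> R) -> (X -> R)) : Prop :=
  (forall u phi psi, pi u (fun x => phi x + psi x) = (fun x => pi u phi x + pi u psi x)) /\
  (forall u (a : R) phi, pi u (fun x => a * phi x) = (fun x => a * pi u phi x)) /\
  (forall u v, pi (u + v) = (fun phi x => pi u phi x + pi v phi x)) /\
  (forall (a : R) u, pi (a *: u) = (fun phi x => a * pi u phi x)) /\
  (forall u v, pi (nua_mul u v) = (fun phi => pi u (pi v phi))).

Definition op_s (R : comPzRingType) (X : Type) (Re : set X) (fe_inv : X -> X)
    (phi : X -> R) : X -> R :=
  fun x => if `[< Re x >] then phi (fe_inv x) else 0.

Definition op_ss (R : comPzRingType) (X : Type) (Dre : set X) (fe : X -> X)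
    (phi : X -> R) : X -> R :=
  fun x => if `[< Dre x >] then phi (fe x) else 0.

Definition op_p (R : comPzRingType) (X : Type) (DA : set X)
    (phi : X -> R) : X -> R :=
  fun x => if `[< DA x >] then phi x else 0.

(* Write 1_P (phi o h) for the operator phi |-> (x |-> if x in P then phi (h x) else 0);
   the three operators of the theorem are 1_{R_e} (phi o f_e^-1), 1_{D_{r(e)}} (phi o f_e)
   and 1_{D_A} phi.  Such operators compose by
     1_P (. o h) o 1_Q (. o k) = 1_{P /\ h^-1 Q} (. o (k o h)),
   so each defining relation of L_R(G) becomes a set identity, and these are exactly the
   axioms of a branching system; e.g. s_e s_e^* acts as 1_{R_e}, and the R_e with
   s(e) = v partition D_v.  The universal property of L_R(G), applied in the algebra of
   R-linear endomorphisms of X -> R, then gives both existence and uniqueness of pi. *)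

From HB Require Import structures.
From mathcomp Require Import all_boot all_algebra.
From mathcomp Require Import boolp classical_sets.
Import GRing.Theory.
Local Open Scope ring_scope.
Local Open Scope classical_set_scope.

Section Endomorphisms.

Variables (X : Type) (R : comPzRingType).

Record endo := Endo {
  endo_fun :> (X -> R) -> (X -> R);
  endo_add : forall phi psi,
    endo_fun (fun x => phi x + psi x) = (fun x => endo_fun phi x + endo_fun psi x);
  endo_scale : forall a phi,
    endo_fun (fun x => a * phi x) = (fun x => a * endo_fun phi x) }.

Lemma endo_ext (u v : endo) : (forall phi x, u phi x = v phi x) -> u = v.
Proof.
case: u v => [u ua us] [v va vs] /= uv.
have u_v : u = v by apply: funext => phi; apply: funext => x; exact: uv.
subst v; by rewrite (Prop_irrelevance ua va) (Prop_irrelevance us vs).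
Qed.

HB.instance Definition _ := gen_eqMixin endo.
HB.instance Definition _ := gen_choiceMixin endo.

Definition endo0 : endo.
refine (@Endo (fun _ _ => 0) _ _).
- by move=> *; apply: funext => x; rewrite addr0.
- by move=> *; apply: funext => x; rewrite mulr0.
Defined.

Definition endo_plus (u v : endo) : endo.
refine (@Endo (fun phi x => u phi x + v phi x) _ _).
- by move=> phi psi; apply: funext => x; rewrite !endo_add addrACA.
- by move=> a phi; apply: funext => x; rewrite !endo_scale mulrDr.
Defined.

Definition endo_opp (u : endo) : endo.
refine (@Endo (fun phi x => - u phi x) _ _).
- by move=> phi psi; apply: funext => x; rewrite !endo_add opprD.
- by move=> a phi; apply: funext => x; rewrite !endo_scale mulrN.
Defined.

Definition endo_scal (a : R) (u : endo) : endo.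
refine (@Endo (fun phi x => a * u phi x) _ _).
- by move=> phi psi; apply: funext => x; rewrite !endo_add mulrDr.
- by move=> b phi; apply: funext => x; rewrite !endo_scale mulrCA.
Defined.

Definition endo_comp (u v : endo) : endo.
refine (@Endo (fun phi => u (v phi)) _ _).
- by move=> phi psi; rewrite !endo_add.
- by move=> b phi; rewrite !endo_scale.
Defined.

Lemma endo_plusA : associative endo_plus.
Proof. by move=> u v w; apply: endo_ext => phi x /=; rewrite addrA. Qed.
Lemma endo_plusC : commutative endo_plus.
Proof. by move=> u v; apply: endo_ext => phi x /=; rewrite addrC. Qed.
Lemma endo_plus0 : left_id endo0 endo_plus.
Proof. by move=> u; apply: endo_ext => phi x /=; rewrite add0r. Qed.
Lemma endo_plusN : left_inverse endo0 endo_opp endo_plus.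
Proof. by move=> u; apply: endo_ext => phi x /=; rewrite addNr. Qed.

HB.instance Definition _ :=
  GRing.isZmodule.Build endo endo_plusA endo_plusC endo_plus0 endo_plusN.

Lemma endo_scalA a b v : endo_scal a (endo_scal b v) = endo_scal (a * b) v.
Proof. by apply: endo_ext => phi x /=; rewrite mulrA. Qed.
Lemma endo_scal1 : left_id 1 endo_scal.
Proof. by move=> u; apply: endo_ext => phi x /=; rewrite mul1r. Qed.
Lemma endo_scalDr : right_distributive endo_scal +%R.
Proof. by move=> a u v; apply: endo_ext => phi x /=; rewrite mulrDr. Qed.
Lemma endo_scalDl v : {morph endo_scal^~ v : a b / a + b}.
Proof. by move=> a b; apply: endo_ext => phi x /=; rewrite mulrDl. Qed.

HB.instance Definition _ :=
  GRing.Zmodule_isLmodule.Build R endo endo_scalA endo_scal1 endo_scalDr endo_scalDl.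

Lemma endo_compA : associative endo_comp.
Proof. by move=> u v w; apply: endo_ext. Qed.
Lemma endo_compDl : left_distributive endo_comp +%R.
Proof. by move=> u v w; apply: endo_ext. Qed.
Lemma endo_compDr : right_distributive endo_comp +%R.
Proof. by move=> u v w; apply: endo_ext => phi x /=; rewrite endo_add. Qed.
Lemma endo_compZl a (u v : endo) : a *: endo_comp u v = endo_comp (a *: u) v.
Proof. by apply: endo_ext. Qed.
Lemma endo_compZr a (u v : endo) : a *: endo_comp u v = endo_comp u (a *: v).
Proof. by apply: endo_ext => phi x /=; rewrite endo_scale. Qed.

Definition endo_nualg : nualg R := NUAlg endo_compA endo_compDl endo_compDr
  endo_compZl endo_compZr.

Lemma nua_hom_endo_hom (L : nualg R) (rho : L -> endo_nualg) :
  nua_hom rho -> endo_hom (fun u => endo_fun (rho u)).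
Proof.
move=> [rhoD [rhoZ rhoM]].
split; first by move=> u; exact: endo_add.
split; first by move=> u; exact: endo_scale.
by split=> [u v | ]; [rewrite rhoD | split=> [a u | u v]; rewrite ?rhoZ ?rhoM].
Qed.

Lemma endo_hom_lift (L : nualg R) (pi : L -> (X -> R) -> (X -> R)) :
  endo_hom pi -> exists2 rho : L -> endo_nualg, nua_hom rho & forall u, endo_fun (rho u) = pi u.
Proof.
move=> [piD [piZ [pi_plus [pi_scal pi_mul]]]].
exists (fun u => @Endo (pi u) (piD u) (piZ u) : endo_nualg) => //.
split; first by move=> u v; apply: endo_ext => phi x; rewrite /= pi_plus.
split; first by move=> a u; apply: endo_ext => phi x; rewrite /= pi_scal.
by move=> u v; apply: endo_ext => phi x; rewrite /= pi_mul.
Qed.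

Definition comp_on (P : set X) (h : X -> X) : endo.
refine (@Endo (fun phi x => if `[< P x >] then phi (h x) else 0) _ _).
- by move=> phi psi; apply: funext => x; case: ifP; rewrite ?addr0.
- by move=> a phi; apply: funext => x; case: ifP; rewrite ?mulr0.
Defined.

Lemma comp_on_ext (P Q : set X) (h k : X -> X) :
  P = Q -> (forall x, P x -> h x = k x) -> comp_on P h = comp_on Q k.
Proof.
move=> <- hk; apply: endo_ext => phi x /=.
by case: (asboolP (P x)) => // /hk ->.
Qed.

Lemma comp_on0 (h : X -> X) : comp_on set0 h = 0.
Proof. by apply: endo_ext => phi x /=; rewrite asboolF. Qed.

Lemma comp_onM (P Q : set X) (h k : X -> X) :
  endo_comp (comp_on P h) (comp_on Q k) = comp_on (P `&` h @^-1` Q) (k \o h).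
Proof.
apply: endo_ext => phi x /=; rewrite asbool_and.
by case: `[< P x >]; case: `[< Q (h x) >].
Qed.

Lemma comp_onU (P Q : set X) (h : X -> X) :
  comp_on (P `|` Q) h = comp_on P h + comp_on Q h - comp_on (P `&` Q) h.
Proof.
apply: endo_ext => phi x /=; rewrite asbool_or asbool_and.
by case: `[< P x >]; case: `[< Q x >]; rewrite /= ?addrK ?subr0 ?addr0 ?add0r.
Qed.

Lemma sum_comp_on_disjoint (I : Type) (P : I -> set X) (h : X -> X) (l : seq I) :
  (forall i j, i <> j -> P i `&` P j = set0) -> List.NoDup l ->
  \sum_(i <- l) comp_on (P i) h = comp_on (\bigcup_(i in [set i | List.In i l]) P i) h.
Proof.
move=> disjP; elim=> {l} [|i l i_notin_l _ IHl].
  by rewrite big_nil -(comp_on0 h); congr comp_on; apply/seteqP; split=> x // [].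
have -> : [set j | List.In j (i :: l)] = i |` [set j | List.In j l].
  by apply/seteqP; split=> j /= [<-|]; by [left | right].
have disj_il : P i `&` \bigcup_(j in [set j | List.In j l]) P j = set0.
  apply/seteqP; split=> // x [Pix [j jl Pjx]].
  have ij : i <> j by move=> ij; subst j.
  by rewrite -(disjP _ _ ij).
by rewrite big_cons IHl bigcup_setU1 comp_onU disj_il comp_on0 subr0.
Qed.

End Endomorphisms.

Arguments endo_fun {X R}.
Arguments endo_ext {X R}.
Arguments nua_hom_endo_hom {X R L}.
Arguments endo_hom_lift {X R L}.
Arguments endo_comp {X R}.
Arguments comp_on {X R}.
Arguments comp_on0 {X R}.

Lemma branching_system_family {G : ultragraph} (R : comPzRingType) {X : Type}
    {Rs : ug_E G -> set X} {D : set (ug_V G) -> set X} {f finv : ug_E G -> X -> X} :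
  branching_system Rs D f finv ->
  ug_family (B := endo_nualg X R) (fun e => comp_on (Rs e) (finv e))
    (fun e => comp_on (D (ug_r e)) (f e)) (fun A => comp_on (D A) id).
Proof.
move=> [disjR [D0 [DI [DU [RD [Dv [f_to [finv_to [finvK fK]]]]]]]]].
rewrite /ug_family; cbn [nua_mul endo_nualg].
split; first by rewrite D0 comp_on0.
split; first by move=> A C HA HC; rewrite comp_onM -DI //; apply: comp_on_ext.
split; first by move=> A C HA HC; rewrite -DU // -DI // comp_onU.
split.
  by move=> e; rewrite comp_onM; apply: comp_on_ext => //; apply: setIidr; exact: RD.
split.
  by move=> e; rewrite comp_onM; apply: comp_on_ext => //; apply: setIidl => y /finv_to.
split.
  by move=> e; rewrite comp_onM; apply: comp_on_ext => //; rewrite setIid.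
split.
  move=> e; rewrite comp_onM; apply: comp_on_ext => //.
  by apply: setIidl => x /f_to /RD.
split.
  move=> e; rewrite comp_onM; apply: comp_on_ext => [|x [/finvK //]].
  by apply: setIidl => x /f_to.
split.
  move=> e e' ee'; rewrite comp_onM -(comp_on0 (finv e' \o f e)); congr comp_on.
  apply/seteqP; split=> // x [/f_to Rex Re'x].
  by have : (Rs e `&` Rs e') (f e x) by []; rewrite disjR.
move=> v l [uniq_l l_src] l_nil.
have -> : \sum_(e <- l) endo_comp (comp_on (Rs e) (finv e)) (comp_on (D (ug_r e)) (f e))
        = \sum_(e <- l) comp_on (Rs e) id :> endo X R.
  apply: eq_bigr => e _; rewrite comp_onM.
  apply: comp_on_ext => [|y [/fK //]].
  by apply: setIidl => y /finv_to.
rewrite sum_comp_on_disjoint // Dv; last first.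
  split; last by exists l.
  by case: l l_nil l_src {uniq_l} => // e l _ l_src; exists e; apply/l_src; left.
by congr (comp_on (\bigcup_(e in _) Rs e) _); apply/seteqP; split=> e /l_src.
Qed.

Theorem mainTheorem4 (G : ultragraph) (R : comPzRingType) (L : nualg R)
    (s ss : ug_E G -> L) (p : set (ug_V G) -> L)
    (HL : is_LPA s ss p)
    (X : Type) (Rs : ug_E G -> set X) (D : set (ug_V G) -> set X)
    (f finv : ug_E G -> X -> X)
    (HB : branching_system Rs D f finv) :
  exists pi : L -> (X -> R) -> (X -> R),
    [/\ endo_hom pi,
        (forall e phi, pi (s e) phi = op_s (Rs e) (finv e) phi),
        (forall e phi, pi (ss e) phi = op_ss (D (ug_r e)) (f e) phi),
        (forall A phi, ugG0 A -> pi (p A) phi = op_p (D A) phi) &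
        (forall pi' : L -> (X -> R) -> (X -> R), endo_hom pi' ->
           (forall e phi, pi' (s e) phi = op_s (Rs e) (finv e) phi) ->
           (forall e phi, pi' (ss e) phi = op_ss (D (ug_r e)) (f e) phi) ->
           (forall A phi, ugG0 A -> pi' (p A) phi = op_p (D A) phi) ->
           forall u, pi' u = pi u)].
Proof.
case: HL => _ /(_ _ _ _ _ (branching_system_family R HB)).
move=> [rho [rho_hom rho_s rho_ss rho_p rho_uniq]].
exists (fun u => endo_fun (rho u)); split.
- exact: nua_hom_endo_hom.
- by move=> e phi; rewrite rho_s.
- by move=> e phi; rewrite rho_ss.
- by move=> A phi HA; rewrite rho_p.
move=> pi' /endo_hom_lift [rho' rho'_hom rho'E] pi'_s pi'_ss pi'_p u.
rewrite -rho'E (rho_uniq rho') //.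
- by move=> e; apply: endo_ext => phi x; rewrite rho'E pi'_s.
- by move=> e; apply: endo_ext => phi x; rewrite rho'E pi'_ss.
- by move=> A HA; apply: endo_ext => phi x; rewrite rho'E pi'_p.
Qed.
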